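(* Let $m\ge3$, $E=\mathbb{Q}(\zeta_m)$, $K=\mathbb{Q}(\zeta_m+\zeta_m^{-1})$, and let $(L,h)$ be a hermitian $\mathcal{O}_E$-lattice with trace lattice $(L,b,f)$. Then $$s(L,b)=\mathrm{Tr}^E_\mathbb{Q}(\mathfrak{s}(L,h))\quad\text{and}\quad n(L,b)=2\,\mathrm{Tr}^K_\mathbb{Q}(\mathfrak{n}(L,h)).$$
   Context: $\mathcal{O}_E=\mathbb{Z}[\zeta_m]$, $\iota$ is complex conjugation on $E$ with fixed field $K$. A hermitian $\mathcal{O}_E$-lattice is a finitely generated projective $\mathcal{O}_E$-module $L$ with a nondegenerate $\iota$-sesquilinear form $h$ on $L\otimes E$. Its trace lattice is $L$ with the symmetric bilinear form $b=\mathrm{Tr}^E_\mathbb{Q}\circ h$ and $f$ = multiplication by $\zeta_m$. For a $\mathbb{Z}$-lattice, $s(L,b)=b(L,L)$ and $n(L,b)=\sum_{x\in L}b(x,x)\mathbb{Z}$; for the hermitian lattice, $\mathfrak{s}(L,h)=h(L,L)$ (a fractional $\mathcal{O}_E$-ideal) and $\mathfrak{n}(L,h)$ is the fractional $\mathcal{O}_K$-ideal generated by the $h(x,x)$, $x\in L$. The trace of a fractional ideal is the $\mathbb{Z}$-module generated by the traces of its elements. *)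

From HB Require Import structures.
From mathcomp Require Import all_boot all_order all_algebra all_field.
Set Implicit Arguments. Unset Strict Implicit. Unset Printing Implicit Defensive.
Import GRing.Theory.
Local Open Scope ring_scope.

(* E is an abstract number field over rat (a splitting field
   type) generated by a primitive m-th root of unity z, i.e. E = Q(zeta_m). *)

Section Defs.
Variable E : splittingFieldType rat.

Definition OE (z : E) : E -> Prop := fun x : E =>
  exists p : {poly int}, x = (map_poly intr p).[z].

Definition OK (z : E) : E -> Prop := fun x : E =>
  exists p : {poly int}, x = (map_poly intr p).[z + z^-1].

Definition zspan (S : E -> Prop) : E -> Prop := fun x =>
  exists (r : nat) (v : 'I_r -> E) (c : 'I_r -> int),
    (forall i, S (v i)) /\ x = \sum_(i < r) v i *~ c i.

Definition rspan (R : E -> Prop) (S : E -> Prop) : E -> Prop := fun x =>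
  exists (r : nat) (v : 'I_r -> E) (c : 'I_r -> E),
    (forall i, S (v i)) /\ (forall i, R (c i)) /\ x = \sum_(i < r) c i * v i.

Definition imgset (f : E -> E) (S : E -> Prop) : E -> Prop := fun y =>
  exists x, S x /\ y = f x.

Definition inLat (z : E) (k n : nat) (B : 'M[E]_(k, n)) (x : 'rV[E]_n) : Prop :=
  exists c : 'rV[E]_k, (forall j, OE z (c 0 j)) /\ x = c *m B.

Definition hform (iota : gal_of {:E}) (n : nat) (G : 'M[E]_n)
  (x y : 'rV[E]_n) : E := (x *m G *m (map_mx iota y)^T) 0 0.

Definition trEQ (a : E) : E := galTrace 1%VS {:E} a.
Definition trKQ (z : E) (a : E) : E := galTrace 1%VS <<1; z + z^-1>>%VS a.

Definition bform iota n G (x y : 'rV[E]_n) : E := trEQ (hform iota G x y).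

Definition scaleZ z iota k n (B : 'M[E]_(k, n)) G : E -> Prop :=
  zspan (fun t => exists x y, inLat z B x /\ inLat z B y /\ t = bform iota G x y).
Definition normZ z iota k n (B : 'M[E]_(k, n)) G : E -> Prop :=
  zspan (fun t => exists x, inLat z B x /\ t = bform iota G x x).

Definition scaleH z iota k n (B : 'M[E]_(k, n)) G : E -> Prop :=
  rspan (OE z) (fun t => exists x y, inLat z B x /\ inLat z B y /\ t = hform iota G x y).
Definition normH z iota k n (B : 'M[E]_(k, n)) G : E -> Prop :=
  rspan (OK z) (fun t => exists x, inLat z B x /\ t = hform iota G x x).

Definition trIdeal (tr : E -> E) (I : E -> Prop) : E -> Prop := zspan (imgset tr I).

End Defs.

From HB Require Import structures.
From mathcomp Require Import all_boot all_order all_algebra all_fingroup all_field.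
From mathcomp Require Import ring.
Set Implicit Arguments. Unset Strict Implicit. Unset Printing Implicit Defensive.
Import GRing.Theory.
Local Open Scope ring_scope.

(* For s(L,b): Tr(c h(x,y)) = Tr h(cx,y) = b(cx,y) for c in O_E, so the traces
   of s(L,h) span the same Z-module as the values of b.  For n(L,b): h(x,x) is
   fixed by iota, hence lies in K, where Tr^E_Q = 2 Tr^K_Q because
   Gal(E/K) = {1, iota} and K/Q is normal (Gal(E/Q) is abelian).  Conversely
   every c in O_K = Z[z + z^-1] is l + d + iota d with l in Z and d in O_E, and
   polarization, c h(x,x) = l h(x,x) + h((1+d)x,(1+d)x) - h(x,x) - h(dx,dx),
   shows that n(L,h) is spanned over Z by the h(x,x). *)

Section Spans.
Variable E : splittingFieldType rat.
Implicit Types (S T I R : E -> Prop) (x y v : E).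

Lemma zspan0 S : zspan S 0.
Proof. by exists 0%N, (fun _ => 0), (fun _ => 0); split; [case | rewrite big_ord0]. Qed.

Lemma zspan_gen S v : S v -> zspan S v.
Proof. by move=> Sv; exists 1%N, (fun _ => v), (fun _ => 1); rewrite big_ord1. Qed.

Lemma zspanD S x y : zspan S x -> zspan S y -> zspan S (x + y).
Proof.
case=> [r [v [c [Sv ->]]]] [s [w [d [Sw ->]]]].
exists (r + s)%N, (fun i => match split i with inl j => v j | inr j => w j end).
exists (fun i => match split i with inl j => c j | inr j => d j end).
split; first by move=> i; case: split.
rewrite big_split_ord; congr (_ + _); apply: eq_bigr => i _.
  by rewrite -[lshift _ i]/(unsplit (inl i)) unsplitK.
by rewrite -[rshift _ i]/(unsplit (inr i)) unsplitK.
Qed.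

Lemma zspanMz S x c : zspan S x -> zspan S (x *~ c).
Proof.
case=> r [v [d [Sv ->]]]; exists r, v, (fun i => d i * c); split => //.
by rewrite mulrz_suml; apply: eq_bigr => i _; rewrite mulrzA.
Qed.

Lemma zspan_min S (P : E -> Prop) :
  P 0 -> (forall x y, P x -> P y -> P (x + y)) -> (forall x c, P x -> P (x *~ c)) ->
  (forall v, S v -> P v) -> forall x, zspan S x -> P x.
Proof. by move=> P0 PD PMz SP _ [r [v [c [Sv ->]]]]; apply: big_ind => // i _; apply/PMz/SP. Qed.

Lemma zspan_sub S T x : (forall v, S v -> zspan T v) -> zspan S x -> zspan T x.
Proof. by move=> ST; apply: zspan_min => //; [apply: zspan0 | apply: zspanD | apply: zspanMz]. Qed.

Lemma eq_zspan S T : (forall v, S v <-> T v) -> forall x, zspan S x <-> zspan T x.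
Proof. by move=> ST x; split; apply: zspan_sub => v /ST; apply: zspan_gen. Qed.

Lemma zspan_img (f : {additive E -> E}) S x : zspan S x -> zspan (imgset f S) (f x).
Proof.
move: x; apply: zspan_min => [|x y|x c|v Sv]; rewrite ?raddf0 ?raddfD ?raddfMz.
- exact: zspan0.
- exact: zspanD.
- exact: zspanMz.
- by apply: zspan_gen; exists v.
Qed.

Lemma zspan_img_generators (f : {additive E -> E}) S I :
  (forall v, S v -> I v) -> (forall v, I v -> zspan S v) ->
  forall y, zspan (imgset f I) y <-> zspan (imgset f S) y.
Proof.
move=> SI IS y; split; apply: zspan_sub => _ [v [Iv ->]].
  exact/zspan_img/IS.
by apply: zspan_gen; exists v; split => //; apply: SI.
Qed.

Lemma zspan_mull a S T : (forall v, T v <-> exists u, S u /\ v = a * u) ->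
  forall y, zspan T y <-> exists u, zspan S u /\ y = a * u.
Proof.
move=> TS y; split; move: y.
  apply: zspan_min => [|_ _ [u [Su ->]] [w [Sw ->]]|_ c [u [Su ->]]|v /TS [u [Su ->]]].
  - by exists 0; split; [apply: zspan0 | rewrite mulr0].
  - by exists (u + w); split; [apply: zspanD | rewrite mulrDr].
  - by exists (u *~ c); split; [apply: zspanMz | rewrite mulrzAr].
  - by exists u; split; [apply: zspan_gen |].
move=> _ [u [Su ->]]; move: u Su; apply: zspan_min => [|u w|u c|u Su].
- by rewrite mulr0; apply: zspan0.
- by rewrite mulrDr; apply: zspanD.
- by rewrite mulrzAr; apply: zspanMz.
- by apply: zspan_gen; apply/TS; exists u.
Qed.

Lemma rspan_gen R S v : R 1 -> S v -> rspan R S v.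
Proof. by move=> R1 Sv; exists 1%N, (fun _ => v), (fun _ => 1); rewrite big_ord1 mul1r. Qed.

Lemma rspan_min R S (P : E -> Prop) :
  P 0 -> (forall x y, P x -> P y -> P (x + y)) ->
  (forall c v, R c -> S v -> P (c * v)) -> forall x, rspan R S x -> P x.
Proof. by move=> P0 PD PRS _ [r [v [c [Sv [Rc ->]]]]]; apply: big_ind => // i _; apply: PRS. Qed.

End Spans.

Section GaloisTower.
Variables (F : fieldType) (L : splittingFieldType F) (K M E : {subfield L}).
Hypotheses (galKE : galois K E) (sKME : (K <= M <= E)%VS).

Lemma abelian_normalField : abelian 'Gal(E / K)%g -> normalField K M.
Proof.
case/andP: sKME => sKM sME abKE.
have nsGal : ('Gal(E / M) <| 'Gal(E / K))%g by rewrite -sub_abelian_normal ?galS.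
have := normal_fixedField_galois galKE nsGal.
by rewrite (galois_fixedField (galoisS sKME galKE)) => /and3P[].
Qed.

Lemma galTrace_tower a : normalField K M -> a \in M ->
  galTrace K E a = #|'Gal(E / M)%g|%:R * galTrace K M a.
Proof.
move=> nKM Ma; pose f := normalField_cast_morphism sKME nKM.
have galKM_img := normalField_img galKE sKME nKM.
rewrite /galTrace (eq_bigr (fun x => f x a)); last first.
  by move=> x galx; rewrite /= (normalField_cast_eq sKME nKM galx Ma).
rewrite (partition_big f (mem 'Gal(M / K)%g)); last first.
  by move=> x galx; rewrite -galKM_img; apply: mem_morphim.
rewrite big_distrr /=; apply: eq_bigr => y; rewrite -galKM_img.
case/morphimP=> x0 galx0 _ ->.
rewrite (eq_bigr (fun _ => f x0 a)); last by move=> x /andP[_ /eqP ->].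
rewrite sumr_const mulr_natl; congr (_ *+ _).
rewrite -(normalField_ker sKME nKM) -(card_rcoset _ x0) -(morphpre_set1 f galx0).
by apply: eq_card => x; rewrite morphpreE !inE.
Qed.

End GaloisTower.

Lemma galois1_rat (L : splittingFieldType rat) : galois 1 {:L}.
Proof.
apply/and3P; split; [exact: sub1v | | exact: normalFieldf].
apply/separableP => y _; apply: pcharf0_separable.
by move=> p; rewrite (pchar_lalg L) (Num.Theory.pchar_num rat).
Qed.

Section HermitianForm.
Variables (E : splittingFieldType rat) (iota : gal_of {:E}) (n : nat) (G : 'M[E]_n).
Implicit Types x y : 'rV[E]_n.

Lemma hformZl a x y : hform iota G (a *: x) y = a * hform iota G x y.
Proof. by rewrite /hform -!scalemxAl mxE. Qed.

Lemma hformZr a x y : hform iota G x (a *: y) = iota a * hform iota G x y.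
Proof. by rewrite /hform map_mxZ linearZ /= -scalemxAr mxE. Qed.

Hypotheses (iotaK : involutive iota) (G_herm : map_mx iota G = G^T).

Lemma hform_conj x y : iota (hform iota G x y) = hform iota G y x.
Proof.
have mapE (A : 'M[E]_1) : iota (A 0 0) = (map_mx iota A) 0 0 by rewrite mxE.
have trE (A : 'M[E]_1) : A 0 0 = A^T 0 0 by rewrite mxE.
rewrite /hform mapE !map_mxM map_trmx G_herm -map_mx_comp (map_mx_id iotaK).
by rewrite trE !trmx_mul !trmxK mulmxA.
Qed.

End HermitianForm.

Section Cyclotomic.
Variables (E : splittingFieldType rat) (m : nat) (z : E) (iota : gal_of {:E}).
Hypotheses (m_gt2 : (2 < m)%N) (prim_z : m.-primitive_root z)
  (genE : <<1; z>>%VS = fullv) (iota_z : iota z = z^-1).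

Local Notation K := <<1; z + z^-1>>%AS.

Lemma z_neq0 : z != 0.
Proof.
apply/eqP => z0; have := prim_expr_order prim_z; rewrite z0 expr0n.
by case: m m_gt2 => // n _ /eqP; rewrite eq_sym oner_eq0.
Qed.

Lemma invz_neq_z : z^-1 != z.
Proof.
apply/eqP => zV; have : z ^+ 2 == 1 by rewrite expr2 -{1}zV mulVf ?z_neq0.
by rewrite -(prim_order_dvd prim_z) => /(dvdn_leq (isT : 0 < 2)%N); rewrite leqNgt m_gt2.
Qed.

Lemma gal_eq_at_z (x y : gal_of {:E}) : x z = y z -> x = y.
Proof.
move=> xy; apply/eqP/gal_eqP => a _.
have : a \in <<1; z>>%VS by rewrite genE memvf.
case/Fadjoin_polyP => p Qp ->.
have Gal1 (u : gal_of {:E}) : u \in 'Gal({:E} / 1)%g.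
  by rewrite -sub1set galois_connection ?sub1v.
by rewrite -!horner_map /= !(fixedPoly_gal (sub1v _) (Gal1 _) Qp) xy.
Qed.

Lemma gal_z_pow (x : gal_of {:E}) : exists i, x z = z ^+ i.
Proof.
have : x z ^+ m = 1 by rewrite -rmorphXn (prim_expr_order prim_z) rmorph1.
by case/(prim_rootP prim_z) => i ->; exists i.
Qed.

Lemma gal_commute (x y : gal_of {:E}) : (x * y)%g = (y * x)%g.
Proof.
have [[i xz] [j yz]] := (gal_z_pow x, gal_z_pow y).
apply: gal_eq_at_z; rewrite !galM ?memvf //.
by rewrite xz yz !rmorphXn /= xz yz -!exprM mulnC.
Qed.

Lemma abelian_gal : abelian 'Gal({:E} / 1)%g.
Proof. by apply/centsP => x _ y _; apply: gal_commute. Qed.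

Lemma iotaK : involutive iota.
Proof.
have iota2 : (iota * iota)%g = 1%g.
  by apply: gal_eq_at_z; rewrite galM ?memvf // iota_z fmorphV /= iota_z invrK gal_id.
by move=> a; rewrite -galM ?memvf // iota2 gal_id.
Qed.

Lemma gal_K : 'Gal({:E} / K)%g = [set 1%g; iota].
Proof.
apply/setP => y; rewrite !inE; apply/idP/idP; last first.
  case/orP => /eqP ->; first exact: group1.
  rewrite -sub1set galois_connection ?subvf //; apply/FadjoinP; split; first exact: sub1v.
  apply/fixedFieldP; first exact: memvf.
  by move=> _ /set1P ->; rewrite rmorphD fmorphV /= iota_z invrK addrC.
move=> galy; have : y (z + z^-1) = z + z^-1 by rewrite (fixed_gal (subvf _) galy) ?memv_adjoin.
rewrite rmorphD fmorphV /=; set t := y z => yw.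
have t_neq0 : t != 0 by rewrite fmorph_eq0 z_neq0.
have : (t - z) * (t - z^-1) == 0.
  have -> : (t - z) * (t - z^-1) = t * t - t * (t + t^-1) + z * z^-1.
    by rewrite yw; ring.
  by apply/eqP; rewrite mulrDr (mulfV t_neq0) (mulfV z_neq0); ring.
rewrite mulf_eq0 !subr_eq0 => /orP[] /eqP yz; apply/orP; [left | right];
  by apply/eqP/gal_eq_at_z; rewrite ?gal_id ?iota_z.
Qed.

Lemma fixed_iota_in_K a : iota a = a -> a \in K.
Proof.
move=> iota_a; have galK : galois K {:E} by apply: galoisS (galois1_rat E); rewrite sub1v subvf.
rewrite -(galois_fixedField galK); apply/fixedFieldP; first exact: memvf.
by move=> y; rewrite gal_K !inE => /orP[] /eqP ->; rewrite ?gal_id.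
Qed.

Lemma trEQ_fixed a : iota a = a -> trEQ a = 2 * trKQ z a.
Proof.
move=> iota_a; have sQKE : (1 <= K <= {:E}%AS)%VS by rewrite sub1v subvf.
have galQ := galois1_rat E.
rewrite /trEQ (galTrace_tower galQ sQKE) ?fixed_iota_in_K //; last first.
  exact: abelian_normalField galQ sQKE abelian_gal.
have iota_neq1 : iota != 1%g.
  by apply: contraNneq invz_neq_z => iota1; rewrite -iota_z iota1 gal_id.
by rewrite gal_K cards2 eq_sym iota_neq1.
Qed.

Lemma OE_add a b : OE z a -> OE z b -> OE z (a + b).
Proof. by case=> p -> [q ->]; exists (p + q); rewrite rmorphD hornerD. Qed.

Lemma OE_mul a b : OE z a -> OE z b -> OE z (a * b).
Proof. by case=> p -> [q ->]; exists (p * q); rewrite rmorphM hornerM. Qed.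

Lemma OE_int (c : int) : OE z c%:~R.
Proof. by exists c%:P; rewrite map_polyC hornerC. Qed.

Lemma OE_z : OE z z.
Proof. by exists 'X; rewrite map_polyX hornerX. Qed.

Lemma OE_zV : OE z z^-1.
Proof.
exists 'X^(m.-1); rewrite map_polyXn hornerXn; apply: (mulIf z_neq0).
by rewrite mulVf ?z_neq0 // -exprSr (prednK (ltnW (ltnW m_gt2))) (prim_expr_order prim_z).
Qed.

Lemma OK_decomp c : OK z c -> exists (l : int) d, OE z d /\ c = l%:~R + d + iota d.
Proof.
case=> p ->; elim/poly_ind: p => [|p l [l' [d [OEd pE]]]].
  by exists 0, 0; split; [apply: (OE_int 0) | rewrite map_poly0 horner0 !rmorph0 !addr0].
exists l, (l'%:~R * z + d * z + d * z^-1); split.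
  apply: OE_add; [apply: OE_add |]; apply: OE_mul => //;
  by [apply: OE_int | apply: OE_z | apply: OE_zV].
rewrite rmorphD rmorphM /= map_polyX map_polyC hornerMXaddC pE.
rewrite !rmorphD !rmorphM /= rmorph_int iota_z fmorphV /= iota_z invrK.
ring.
Qed.

Section Lattice.
Variables (k n : nat) (B : 'M[E]_(k, n)) (G : 'M[E]_n).
Hypothesis G_herm : map_mx iota G = G^T.

Local Notation hvalues :=
  (fun t => exists x y, inLat z B x /\ inLat z B y /\ t = hform iota G x y).
Local Notation hnorms := (fun t => exists x, inLat z B x /\ t = hform iota G x x).

Lemma inLat_scale a x : OE z a -> inLat z B x -> inLat z B (a *: x).
Proof.
move=> OEa [c [OEc ->]]; exists (a *: c); split; last by rewrite scalemxAl.
by move=> j; rewrite mxE; apply: OE_mul.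
Qed.

Lemma scaleH_zspan t : scaleH z iota B G t -> zspan hvalues t.
Proof.
apply: rspan_min => [|u v|c _ OEc [x [y [Lx [Ly ->]]]]]; first exact: zspan0.
  exact: zspanD.
by apply: zspan_gen; exists (c *: x), y; rewrite hformZl; split => //; apply: inLat_scale.
Qed.

Lemma normH_zspan t : normH z iota B G t -> zspan hnorms t.
Proof.
apply: rspan_min => [|u v|c _ OKc [x [Lx ->]]]; first exact: zspan0.
  exact: zspanD.
have [l [d [OEd ->]]] := OK_decomp OKc.
have OE1d : OE z (1 + d) by apply: OE_add => //; apply: (OE_int 1).
have gen y : inLat z B y -> zspan hnorms (hform iota G y y).
  by move=> Ly; apply: zspan_gen; exists y.
have -> : (l%:~R + d + iota d) * hform iota G x x = hform iota G x x *~ l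
   + hform iota G ((1 + d) *: x) ((1 + d) *: x)
   + hform iota G x x *~ -1 + hform iota G (d *: x) (d *: x) *~ -1.
  by rewrite !hformZl !hformZr rmorphD rmorph1; ring.
by repeat apply: zspanD; try apply: zspanMz; apply: gen => //; apply: inLat_scale.
Qed.

Lemma scale_trace t : scaleZ z iota B G t <-> trIdeal (@trEQ E) (scaleH z iota B G) t.
Proof.
have hvaluesH v : hvalues v -> scaleH z iota B G v.
  by case=> x [y [Lx [Ly ->]]]; apply: rspan_gen; [apply: (OE_int 1) | exists x, y].
apply: iff_trans (iff_sym (zspan_img_generators (galTrace 1 {:E}) hvaluesH scaleH_zspan t)).
apply: eq_zspan => v; split => [[x [y [Lx [Ly ->]]]] | [_ [[x [y [Lx [Ly ->]]]] ->]]].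
  by exists (hform iota G x y); split => //; exists x, y.
by exists x, y.
Qed.

Lemma norm_trace t : normZ z iota B G t <->
  (exists u, trIdeal (trKQ z) (normH z iota B G) u /\ t = 2 * u).
Proof.
have hnormsH v : hnorms v -> normH z iota B G v.
  have OK1 : OK z 1 by exists 1; rewrite rmorph1 hornerC.
  by case=> x [Lx ->]; apply: rspan_gen => //; exists x.
have gens := zspan_img_generators (galTrace 1 <<1; z + z^-1>>) hnormsH normH_zspan.
have bE x : bform iota G x x = 2 * trKQ z (hform iota G x x).
  exact/trEQ_fixed/hform_conj/G_herm/iotaK.
have normsE v : (exists x, inLat z B x /\ v = bform iota G x x) <->
    exists u, imgset (trKQ z) hnorms u /\ v = 2 * u.
  split=> [[x [Lx ->]] | [_ [[_ [[x [Lx ->]] ->]] ->]]]; last by exists x; rewrite bE.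
  exists (trKQ z (hform iota G x x)); split; last exact: bE.
  by exists (hform iota G x x); split => //; exists x.
apply: iff_trans (zspan_mull normsE t) _.
by split=> -[u [Hu ->]]; exists u; split => //; apply/gens.
Qed.

End Lattice.
End Cyclotomic.

Theorem lemma3p3 (E : splittingFieldType rat) (m : nat) (z : E)
  (iota : gal_of {:E}) (k n : nat) (B : 'M[E]_(k, n)) (G : 'M[E]_n) :
  (2 < m)%N -> m.-primitive_root z -> <<1; z>>%VS = fullv ->
  iota z = z^-1 ->
  G \in unitmx -> map_mx iota G = G^T -> row_full B ->
  (forall t, scaleZ z iota B G t <-> trIdeal (@trEQ E) (scaleH z iota B G) t) /\
  (forall t, normZ z iota B G t <->
     (exists u, trIdeal (trKQ z) (normH z iota B G) u /\ t = 2 * u)).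
Proof.
move=> m_gt2 prim_z genE iota_z _ G_herm _.
split=> t; first exact: scale_trace.
exact: (norm_trace m_gt2 prim_z genE iota_z B G_herm).
Qed.
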